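(* Let $p,q,s$ be complex numbers with $p\neq0$, $q\neq 0$, $s^2\neq -1$. Let $\tilde A$ be the unital complex algebra generated by $\xi,\eta,\zeta,U,V,Z$ subject to the relations $$\zeta\xi=q^2\xi\zeta,\quad \eta\zeta=q^2\zeta\eta,\quad \xi U=pU\xi,\quad V\xi=p\xi V,\quad \eta V=pV\eta,\quad U\eta=p\eta U,$$ $$UV=VU,\quad U\zeta=\zeta U,\quad V\zeta=\zeta V,$$ $$\xi\eta=(\zeta-1)(\zeta+s^2)+UV,\qquad \eta\xi=(q^2\zeta-1)(q^2\zeta+s^2)+UV,$$ together with the requirements that $Z$ is central and $Z^2=UV$. Let $$\tilde e=\frac{1}{2(1+s^2)}\begin{pmatrix}1+s^2+2Z&0&1-s^2-2\zeta&2\xi\\ 0&1+s^2+2Z&-2\eta&s^2-1+2q^2\zeta\\ 1-s^2-2\zeta&2\xi&1+s^2-2Z&0\\ -2\eta&s^2-1+2q^2\zeta&0&1+s^2-2Z\end{pmatrix}\in\mathrm{Mat}_4(\tilde A).$$ Then $\tilde e^2=\tilde e$. Moreover, if $q^2,s^2$ are real, $|p|=1$, and $\tilde A$ carries the involution with $\zeta^*=\zeta$, $\xi^*=-\eta$, $U^*=V$, $Z^*=Z$, then $\tilde e^*=\tilde e$ (entrywise involution combined with transposition). *)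

From HB Require Import structures.
From mathcomp Require Import all_boot all_order all_algebra.
From mathcomp Require Import complex.
From mathcomp Require Import Rstruct.
Set Implicit Arguments. Unset Strict Implicit. Unset Printing Implicit Defensive.
Import Order.TTheory GRing.Theory Num.Theory.
Local Open Scope ring_scope.

Notation CC := (complex Rdefinitions.R).

Definition tildeA_relations (A : algType CC) (p q s : CC)
    (xi eta zeta U V Z : A) : Prop :=
  [/\ [/\ zeta * xi = (q ^+ 2)%:A * xi * zeta,
         eta * zeta = (q ^+ 2)%:A * zeta * eta &
         xi * U = p%:A * U * xi],
      [/\ V * xi = p%:A * xi * V,
         eta * V = p%:A * V * eta &
         U * eta = p%:A * eta * U],
      [/\ U * V = V * U,
         U * zeta = zeta * U &
         V * zeta = zeta * V],
      [/\ xi * eta = (zeta - 1) * (zeta + (s ^+ 2)%:A) + U * V &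
         eta * xi = ((q ^+ 2)%:A * zeta - 1) * ((q ^+ 2)%:A * zeta + (s ^+ 2)%:A)
                    + U * V] &
      [/\ forall a : A, Z * a = a * Z & Z ^+ 2 = U * V]].

Definition e_tilde (A : algType CC) (q s : CC) (xi eta zeta Z : A)
    : 'M[A]_4 :=
  let c : A := ((2 * (1 + s ^+ 2))^-1)%:A in
  let a := (1 + s ^+ 2)%:A + Z *+ 2 in
  let b := (1 + s ^+ 2)%:A - Z *+ 2 in
  let d := (1 - s ^+ 2)%:A - zeta *+ 2 in
  let f := (s ^+ 2 - 1)%:A + ((q ^+ 2)%:A * zeta) *+ 2 in
  let rows : seq (seq A) :=
    [:: [:: a;        0;      d;      xi *+ 2];
        [:: 0;        a;      - (eta *+ 2); f];
        [:: d;        xi *+ 2; b;      0];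
        [:: - (eta *+ 2); f;   0;      b]] in
  \matrix_(i < 4, j < 4) (c * nth 0 (nth [::] rows i) j).

Definition is_involution (A : algType CC) (star : A -> A) : Prop :=
  [/\ forall a b, star (a + b) = star a + star b,
      forall (c : CC) a, star (c *: a) = (c^*)%C *: star a,
      forall a b, star (a * b) = star b * star a &
      forall a, star (star a) = a].

Definition mx_star (A : algType CC) (star : A -> A) (m : 'M[A]_4) : 'M[A]_4 :=
  \matrix_(i < 4, j < 4) star (m j i).

From HB Require Import structures.
From mathcomp Require Import all_boot all_order all_algebra.
From mathcomp Require Import complex Rstruct ring.
Import Order.TTheory GRing.Theory Num.Theory.
Local Open Scope ring_scope.

(* Write 2 (1 + s^2) e = [[a 1, N], [N, b 1]] with a, b = 1 + s^2 +- 2 Z central and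
   N = [[d, 2 xi], [-2 eta, f]], where d = 1 - s^2 - 2 zeta and f = s^2 - 1 + 2 q^2 zeta.
   Such a block matrix squares to (a + b) times itself as soon as N^2 = a b 1, and
   a + b = 2 (1 + s^2) is exactly the normalising factor.  The diagonal entries of N^2
   equal a b = (1 + s^2)^2 - 4 U V by the quadratic relations for xi eta and eta xi and
   Z^2 = U V; the off-diagonal ones vanish by the q^2-commutation of zeta with xi and eta.
   For the adjoint, a, b, d, f are self-adjoint when q^2, s^2 are real, and the
   involution swaps 2 xi and -2 eta, which is what transposition requires. *)

Lemma alg_quadratic_identity (R : comNzRingType) (A : algType R) (u : A) (r : R) :
  ((r - 1)%:A + u *+ 2) ^+ 2 - ((u - 1) * (u + r%:A)) *+ 4 = ((1 + r) ^+ 2)%:A.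
Proof.
(* Transport an identity of the commutative ring [{poly R}] along [horner_alg u]. *)
have polyE : ((r - 1)%:P + 'X *+ 2) ^+ 2 - (('X - 1) * ('X + r%:P)) *+ 4
             = ((1 + r) ^+ 2)%:P :> {poly R}.
  by rewrite !(rmorphB, rmorphD, rmorphXn, rmorph1); ring.
move: (congr1 (horner_alg u) polyE).
by rewrite !(rmorphXn (horner_alg u), rmorphMn (horner_alg u), rmorphM (horner_alg u),
             rmorphB (horner_alg u), rmorphD (horner_alg u), rmorph1 (horner_alg u))
           /= !horner_algC horner_algX.
Qed.

Lemma alg_sqr_diff (R : pzRingType) (A : algType R) (u : A) (k : R) :
  (k%:A + u) * (k%:A - u) = (k ^+ 2)%:A - u ^+ 2.
Proof.
by rewrite mulrDl !mulrBr (comm_alg k u) addrA subrK -!expr2 exprZn expr1n.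
Qed.

Section Block4.

Variables (R : nzRingType) (a b d x y f : R).

Definition block4_mx : 'M[R]_4 :=
  \matrix_(i < 4, j < 4)
    nth 0 (nth [::] [:: [:: a; 0; d; x]; [:: 0; a; y; f];
                        [:: d; x; b; 0]; [:: y; f; 0; b]] i) j.

Hypotheses (a_central : forall w, GRing.comm a w)
           (b_central : forall w, GRing.comm b w).
Hypotheses (sqrN11 : d * d + x * y = a * b) (sqrN12 : d * x + x * f = 0)
           (sqrN21 : y * d + f * y = 0) (sqrN22 : y * x + f * f = a * b).

Lemma block4_mx_sqr : block4_mx *m block4_mx = (a + b) *: block4_mx.
Proof.
have sum_ab_l u : a * u + u * b = (a + b) * u by rewrite mulrDl (b_central u).
have sum_ab_r u : u * a + b * u = (a + b) * u by rewrite mulrDl (a_central u).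
apply/matrixP => i j; rewrite /block4_mx !mxE !big_ord_recr big_ord0 /= add0r !mxE.
case: i => [[|[|[|[|i]]]] Hi] //=; case: j => [[|[|[|[|j]]]] Hj] //=;
  rewrite ?mul0r ?mulr0 ?addr0 ?add0r //.
- by rewrite -addrA sqrN11.
- by rewrite -addrA sqrN22.
- by rewrite sqrN11.
- by rewrite sqrN22.
Qed.

End Block4.

Arguments block4_mx {R}.

Lemma mulmx_scale_central (R : nzRingType) m n p (c : R)
    (M : 'M[R]_(m, n)) (N : 'M[R]_(n, p)) :
  (forall w, GRing.comm c w) -> M *m (c *: N) = c *: (M *m N).
Proof.
move=> c_central; apply/matrixP => i j; rewrite !mxE mulr_sumr.
by apply: eq_bigr => k _; rewrite mxE mulrA -c_central mulrA.
Qed.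

Lemma scalemx_idem (R : nzRingType) n (c t : R) (M : 'M[R]_n) :
  (forall w, GRing.comm c w) -> c * t = 1 -> M *m M = t *: M ->
  (c *: M) *m (c *: M) = c *: M.
Proof.
move=> c_central ct_1 sqrM.
by rewrite -scalemxAl mulmx_scale_central // sqrM !scalerA -mulrA ct_1 mulr1.
Qed.

Section Involution.

Context {A : algType CC} {star : A -> A} (star_inv : is_involution star).

Lemma star_scale_real (c : CC) (u : A) :
  c \is Num.real -> star (c *: u) = c *: star u.
Proof.
case: star_inv => _ starZ _ _ c_real.
by rewrite starZ; congr (_ *: _); move: c_real; rewrite CrealE => /eqP.
Qed.

Lemma star0 : star 0 = 0.
Proof. by rewrite -(scale0r (0 : A)) star_scale_real ?real0 // !scale0r. Qed.

Lemma starN (u : A) : star (- u) = - star u.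
Proof. by rewrite -scaleN1r star_scale_real ?realN ?real1 // scaleN1r. Qed.

Lemma starMn (u : A) n : star (u *+ n) = star u *+ n.
Proof.
case: star_inv => starD _ _ _.
by elim: n => [|n IHn]; rewrite ?mulr0n ?star0 // !mulrS starD IHn.
Qed.

Lemma star1 : star 1 = 1.
Proof.
case: star_inv => _ _ starM starK.
by move: (starM (star 1) 1); rewrite mulr1 starK mulr1 => /esym.
Qed.

Lemma star_alg_real (c : CC) : c \is Num.real -> star c%:A = c%:A.
Proof. by move=> c_real; rewrite star_scale_real // star1. Qed.

Lemma mx_star_block4 (c : CC) (a b d x y f : A) : c \is Num.real ->
  mx_star star (c%:A *: block4_mx a b d x y f)
  = c%:A *: block4_mx (star a) (star b) (star d) (star y) (star x) (star f).
Proof.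
case: star_inv => _ _ starM _ c_real.
apply/matrixP => i j; rewrite /block4_mx !mxE starM star_alg_real // -comm_alg.
by case: i => [[|[|[|[|i]]]] Hi] //=; case: j => [[|[|[|[|j]]]] Hj] //=; rewrite star0.
Qed.

End Involution.

Section TildeA.

Context {q s : CC} {A : algType CC} {xi eta zeta U V Z : A}.

Local Notation k := (1 + s ^+ 2).
Local Notation a := (k%:A + Z *+ 2).
Local Notation b := (k%:A - Z *+ 2).
Local Notation d := ((1 - s ^+ 2)%:A - zeta *+ 2).
Local Notation f := ((s ^+ 2 - 1)%:A + ((q ^+ 2)%:A * zeta) *+ 2).
Local Notation x := (xi *+ 2).
Local Notation y := (- (eta *+ 2)).

Lemma e_tildeE :
  e_tilde q s xi eta zeta Z = ((2 * k)^-1)%:A *: block4_mx a b d x y f.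
Proof. by apply/matrixP => i j; rewrite !mxE. Qed.

Hypotheses (Z_central : forall w, Z * w = w * Z) (Z_sqr : Z ^+ 2 = U * V).

Lemma e_tilde_diag_mul : a * b = (k ^+ 2)%:A - (U * V) *+ 4.
Proof. by rewrite alg_sqr_diff exprMn_n Z_sqr. Qed.

Hypotheses (xi_eta : xi * eta = (zeta - 1) * (zeta + (s ^+ 2)%:A) + U * V)
  (eta_xi : eta * xi = ((q ^+ 2)%:A * zeta - 1) * ((q ^+ 2)%:A * zeta + (s ^+ 2)%:A)
                       + U * V).

Lemma e_tilde_sqrN11 : d * d + x * y = a * b.
Proof.
have -> : d = - ((s ^+ 2 - 1)%:A + zeta *+ 2).
  by rewrite -[1 - _]opprB scaleNr [RHS]opprD.
rewrite mulrNN -expr2 mulrN mulrnAl mulrnAr -mulrnA xi_eta mulrnDl opprD addrA.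
by rewrite alg_quadratic_identity e_tilde_diag_mul.
Qed.

Lemma e_tilde_sqrN22 : y * x + f * f = a * b.
Proof.
rewrite -expr2 mulNr mulrnAl mulrnAr -mulrnA eta_xi mulrnDl opprD addrC addrA.
by rewrite alg_quadratic_identity e_tilde_diag_mul.
Qed.

Hypothesis zeta_xi : zeta * xi = (q ^+ 2)%:A * xi * zeta.

Lemma e_tilde_sqrN12 : d * x + x * f = 0.
Proof.
rewrite mulrnAr mulrnAl -mulrnDl mulrBl mulrDr mulrnAl mulrnAr zeta_xi.
rewrite [xi * (_ * zeta)]mulrA -!comm_alg addrACA addNr addr0 -mulrDl -scalerDl.
by rewrite addrA subrK subrr scale0r mul0r mul0rn.
Qed.

Hypothesis eta_zeta : eta * zeta = (q ^+ 2)%:A * zeta * eta.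

Lemma e_tilde_sqrN21 : y * d + f * y = 0.
Proof.
rewrite mulNr mulrN -opprD mulrnAl mulrnAr -mulrnDl mulrBr mulrDl mulrnAl mulrnAr.
rewrite eta_zeta -!comm_alg addrACA addNr addr0 -mulrDl -scalerDl.
by rewrite addrA subrK subrr scale0r mul0r mul0rn oppr0.
Qed.

Hypothesis s2_neq_N1 : s ^+ 2 != - 1.

Lemma e_tilde_idem : e_tilde q s xi eta zeta Z * e_tilde q s xi eta zeta Z
                     = e_tilde q s xi eta zeta Z.
Proof.
have k_neq0 : 2 * k != 0 by rewrite mulf_neq0 ?pnatr_eq0 // addrC addr_eq0.
have sum_diag : a + b = (2 * k)%:A.
  by rewrite addrACA subrr addr0 -scalerDl -mulr2n mulr_natl.
rewrite e_tildeE; apply: (@scalemx_idem _ _ _ (2 * k)%:A).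
- exact: comm_alg.
- by rewrite mulr_algl scalerA mulVf // scale1r.
rewrite block4_mx_sqr ?sum_diag //.
- by move=> w; rewrite /GRing.comm mulrDl mulrDr comm_alg mulrnAl mulrnAr Z_central.
- by move=> w; rewrite /GRing.comm mulrBl mulrBr comm_alg mulrnAl mulrnAr Z_central.
- exact: e_tilde_sqrN11.
- exact: e_tilde_sqrN12.
- exact: e_tilde_sqrN21.
- exact: e_tilde_sqrN22.
Qed.

Lemma e_tilde_selfadjoint (star : A -> A) :
  q ^+ 2 \is Num.real -> s ^+ 2 \is Num.real -> is_involution star ->
  star zeta = zeta -> star xi = - eta -> star Z = Z ->
  mx_star star (e_tilde q s xi eta zeta Z) = e_tilde q s xi eta zeta Z.
Proof.
move=> q2_real s2_real star_inv star_zeta star_xi star_Z.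
have [starD _ starM starK] := star_inv.
have starN := starN star_inv; have starMn := starMn star_inv.
have star_alg_real := star_alg_real star_inv.
have starB u v : star (u - v) = star u - star v by rewrite starD starN.
have star_eta : star eta = - xi by rewrite -[eta]opprK -star_xi starN starK.
have k_real : k \is Num.real by rewrite realD ?real1.
rewrite e_tildeE (mx_star_block4 star_inv) ?realV ?realM ?realn //.
congr (_ *: block4_mx _ _ _ _ _ _).
- by rewrite starD star_alg_real // starMn star_Z.
- by rewrite starB star_alg_real // starMn star_Z.
- by rewrite starB star_alg_real ?realB ?real1 // starMn star_zeta.
- by rewrite starN starMn star_eta mulNrn opprK.
- by rewrite starMn star_xi mulNrn.
- rewrite starD star_alg_real ?realB ?real1 // starMn starM star_zeta star_alg_real //.
  by rewrite comm_alg.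
Qed.

End TildeA.

Theorem mainTheorem3 (p q s : CC) (hp : p != 0) (hq : q != 0)
    (hs : s ^+ 2 != - 1)
    (A : algType CC) (xi eta zeta U V Z : A)
    (hrel : tildeA_relations p q s xi eta zeta U V Z) :
  e_tilde q s xi eta zeta Z * e_tilde q s xi eta zeta Z
    = e_tilde q s xi eta zeta Z
  /\
  (forall star : A -> A,
     q ^+ 2 \is Num.real -> s ^+ 2 \is Num.real -> `|p| = 1 ->
     is_involution star ->
     star zeta = zeta -> star xi = - eta -> star U = V -> star Z = Z ->
     mx_star star (e_tilde q s xi eta zeta Z) = e_tilde q s xi eta zeta Z).
Proof.
case: hrel => [[zeta_xi eta_zeta _] _ _ [xi_eta eta_xi] [Z_central Z_sqr]].
split; first exact: (e_tilde_idem Z_central Z_sqr xi_eta eta_xi zeta_xi eta_zeta hs).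
move=> star q2_real s2_real _ star_inv star_zeta star_xi _ star_Z.
exact: e_tilde_selfadjoint.
Qed.
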